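(* Let $a,b>0$ with $\min(a,b)\ge 1$, let $s\in\mathbb{R}$ and let $\gamma>0$ be a constant. Then the function $$ g(x)=\gamma\left(\left(\tfrac{a}{2}\right)^2+\left(\tfrac{x}{2}\right)^2\right)^{\frac{a-1}{2}}\left(\left(\tfrac{b}{2}\right)^2+\left(\tfrac{s-x}{2}\right)^2\right)^{\frac{b-1}{2}}e^{-x\arctan\left(\frac{x}{a}\right)-(s-x)\arctan\left(\frac{s-x}{b}\right)},\quad x\in\mathbb{R}, $$ is log-concave on $\mathbb{R}$.
   Context: A positive function $g$ on $\mathbb{R}$ is log-concave if $\log g$ is concave. *)

From Stdlib Require Import Reals.
Open Scope R_scope.

Definition concave_on_R (f : R -> R) : Prop :=
  forall x y t, 0 <= t <= 1 ->
    t * f x + (1 - t) * f y <= f (t * x + (1 - t) * y).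

Definition log_concave (g : R -> R) : Prop :=
  (forall x, 0 < g x) /\ concave_on_R (fun x => ln (g x)).

Definition gfun (a b s gamma : R) (x : R) : R :=
  gamma
  * Rpower ((a / 2) ^ 2 + (x / 2) ^ 2) ((a - 1) / 2)
  * Rpower ((b / 2) ^ 2 + ((s - x) / 2) ^ 2) ((b - 1) / 2)
  * exp (- x * atan (x / a) - (s - x) * atan ((s - x) / b)).

(* Taking logarithms, ln g(x) = ln gamma + phi_a(x) + phi_b(s - x) with
   phi_c(x) = (c-1)/2 ln((c/2)^2 + (x/2)^2) - x atan(x/c).  A direct computation gives
   phi_c''(x) = -(c^2 + c^3 + (c-1) x^2) / (c^2 + x^2)^2, which is nonpositive when c >= 1,
   so each phi_c is concave; concavity survives the reflection x |-> s - x and sums. *)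

From Stdlib Require Import Reals Lra Psatz.
From Coquelicot Require Import Coquelicot.
Open Scope R_scope.

Lemma concave_on_R_of_lt (h : R -> R) :
  (forall x y t, x < y -> 0 < t < 1 ->
     t * h x + (1 - t) * h y <= h (t * x + (1 - t) * y)) ->
  concave_on_R h.
Proof.
  intros hlt x y t ht.
  destruct (Req_dec t 0) as [-> | ht0].
  { replace (0 * x + (1 - 0) * y) with y by ring. lra. }
  destruct (Req_dec t 1) as [-> | ht1].
  { replace (1 * x + (1 - 1) * y) with x by ring. lra. }
  destruct (Rtotal_order x y) as [hxy | [-> | hxy]].
  - apply hlt; lra.
  - replace (t * y + (1 - t) * y) with y by ring. lra.
  - replace (t * x + (1 - t) * y) with ((1 - t) * y + (1 - (1 - t)) * x) by ring.
    replace (t * h x + (1 - t) * h y) with ((1 - t) * h y + (1 - (1 - t)) * h x) by ring.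
    apply hlt; lra.
Qed.

Lemma concave_on_R_of_deriv_nonincreasing (h h' : R -> R) :
  (forall x, derivable_pt_lim h x (h' x)) ->
  (forall x y, x < y -> h' y <= h' x) ->
  concave_on_R h.
Proof.
  intros dh mono. apply concave_on_R_of_lt. intros x y t hxy ht.
  set (z := t * x + (1 - t) * y).
  assert (hxz : x < z) by (unfold z; nra).
  assert (hzy : z < y) by (unfold z; nra).
  destruct (MVT_cor2 h h' x z hxz (fun c _ => dh c)) as [c1 [mvt1 [_ hc1]]].
  destruct (MVT_cor2 h h' z y hzy (fun c _ => dh c)) as [c2 [mvt2 [hc2 _]]].
  assert (slopes : h' c2 <= h' c1) by (apply mono; lra).
  replace (z - x) with ((1 - t) * (y - x)) in mvt1 by (unfold z; ring).
  replace (y - z) with (t * (y - x)) in mvt2 by (unfold z; ring).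
  assert (gap : t * h x + (1 - t) * h y - h z
                = t * (1 - t) * (y - x) * (h' c2 - h' c1)) by nra.
  assert (0 <= t * (1 - t) * (y - x)) by (apply Rmult_le_pos; nra).
  nra.
Qed.

Lemma concave_on_R_of_deriv2_nonpos (h h' h'' : R -> R) :
  (forall x, derivable_pt_lim h x (h' x)) ->
  (forall x, derivable_pt_lim h' x (h'' x)) ->
  (forall x, h'' x <= 0) ->
  concave_on_R h.
Proof.
  intros dh dh' h''_nonpos.
  apply (concave_on_R_of_deriv_nonincreasing h h' dh).
  intros x y hxy.
  destruct (MVT_cor2 h' h'' x y hxy (fun c _ => dh' c)) as [c [mvt _]].
  specialize (h''_nonpos c). nra.
Qed.

Lemma concave_on_R_plus (f g : R -> R) :
  concave_on_R f -> concave_on_R g -> concave_on_R (fun x => f x + g x).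
Proof.
  intros cf cg x y t ht.
  specialize (cf x y t ht). specialize (cg x y t ht). lra.
Qed.

Lemma concave_on_R_const (c : R) : concave_on_R (fun _ => c).
Proof. intros x y t ht. lra. Qed.

Lemma concave_on_R_reflect (f : R -> R) (s : R) :
  concave_on_R f -> concave_on_R (fun x => f (s - x)).
Proof.
  intros cf x y t ht.
  replace (s - (t * x + (1 - t) * y)) with (t * (s - x) + (1 - t) * (s - y)) by ring.
  apply cf; exact ht.
Qed.

Definition log_factor (c x : R) : R :=
  (c - 1) / 2 * ln ((c / 2) ^ 2 + (x / 2) ^ 2) - x * atan (x / c).

Definition log_factor_d1 (c x : R) : R := - x / (c ^ 2 + x ^ 2) - atan (x / c).

Definition log_factor_d2 (c x : R) : R :=
  - (c ^ 2 + c ^ 3 + (c - 1) * x ^ 2) / (c ^ 2 + x ^ 2) ^ 2.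

Lemma sum_sq_pos (c x : R) : 0 < c -> 0 < c ^ 2 + x ^ 2.
Proof. intros hc. pose proof (pow2_ge_0 x). pose proof (pow_lt c 2 hc). lra. Qed.

Lemma log_factor_derive (c x : R) :
  0 < c -> derivable_pt_lim (log_factor c) x (log_factor_d1 c x).
Proof.
  intros hc. apply is_derive_Reals. unfold log_factor, log_factor_d1.
  pose proof (sum_sq_pos c x hc).
  auto_derive.
  - pose proof (sum_sq_pos (c / 2) (x / 2) ltac:(lra)). lra.
  - change (x / c) with (x * / c). field. lra.
Qed.

Lemma log_factor_d1_derive (c x : R) :
  0 < c -> derivable_pt_lim (log_factor_d1 c) x (log_factor_d2 c x).
Proof.
  intros hc. apply is_derive_Reals. unfold log_factor_d1, log_factor_d2.
  pose proof (sum_sq_pos c x hc).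
  auto_derive.
  - lra.
  - field. lra.
Qed.

Lemma log_factor_d2_nonpos (c x : R) : 1 <= c -> log_factor_d2 c x <= 0.
Proof.
  intros hc. unfold log_factor_d2, Rdiv.
  rewrite Ropp_mult_distr_l_reverse. apply Ropp_le_cancel. rewrite Ropp_0, Ropp_involutive.
  apply Rmult_le_pos.
  - pose proof (pow_lt c 2 ltac:(lra)). pose proof (pow_lt c 3 ltac:(lra)).
    assert (0 <= (c - 1) * x ^ 2) by (apply Rmult_le_pos; [lra | apply pow2_ge_0]). lra.
  - left. apply Rinv_0_lt_compat, pow_lt, sum_sq_pos. lra.
Qed.

Lemma log_factor_concave (c : R) : 1 <= c -> concave_on_R (log_factor c).
Proof.
  intros hc.
  apply (concave_on_R_of_deriv2_nonpos _ (log_factor_d1 c) (log_factor_d2 c)).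
  - intros x. apply log_factor_derive. lra.
  - intros x. apply log_factor_d1_derive. lra.
  - intros x. apply log_factor_d2_nonpos. exact hc.
Qed.

Lemma gfun_pos (a b s gamma x : R) :
  0 < gamma -> 0 < gfun a b s gamma x.
Proof.
  intros hgamma. unfold gfun, Rpower.
  repeat apply Rmult_lt_0_compat; try apply exp_pos; exact hgamma.
Qed.

Lemma ln_gfun (a b s gamma x : R) :
  0 < gamma ->
  ln (gfun a b s gamma x) = ln gamma + log_factor a x + log_factor b (s - x).
Proof.
  intros hgamma. unfold gfun, Rpower, log_factor.
  rewrite !ln_mult, !ln_exp;
    try apply exp_pos; try (repeat apply Rmult_lt_0_compat; try apply exp_pos); try lra.
Qed.

Theorem lemma1 (a b s gamma : R) (ha : 0 < a) (hb : 0 < b)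
  (hmin : 1 <= Rmin a b) (hgamma : 0 < gamma) :
  log_concave (gfun a b s gamma).
Proof.
  assert (ha1 : 1 <= a) by (pose proof (Rmin_l a b); lra).
  assert (hb1 : 1 <= b) by (pose proof (Rmin_r a b); lra).
  split.
  - intros x. apply gfun_pos. exact hgamma.
  - intros x y t ht. rewrite !ln_gfun by exact hgamma. revert x y t ht.
    apply (concave_on_R_plus (fun x => ln gamma + log_factor a x)).
    + apply concave_on_R_plus.
      * apply concave_on_R_const.
      * apply log_factor_concave. exact ha1.
    + apply concave_on_R_reflect, log_factor_concave. exact hb1.
Qed.
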